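(* Let $q$ be a power of an odd prime, $c\in\mathbb{F}_q^*$, and $f(X)=c(X^{q+1}-X^2)$ on $\mathbb{F}_{q^2}$. Every cycle of the functional graph of $f$ whose length is greater than $1$ has even length.
   Context: The functional graph of $f$ is the directed graph on $\mathbb{F}_{q^2}$ with edges $x\to f(x)$; a cycle of length $n$ is a set of $n$ distinct elements $\alpha, f(\alpha),\dots,f^{(n-1)}(\alpha)$ with $f^{(n)}(\alpha)=\alpha$. *)

From HB Require Import structures.
From mathcomp Require Import all_boot all_order all_algebra all_field.
Set Implicit Arguments. Unset Strict Implicit. Unset Printing Implicit Defensive.
Import GRing.Theory.
Local Open Scope ring_scope.

Definition fmap (F : finFieldType) (q : nat) (c : F) (x : F) : F :=
  c * (x ^+ q.+1 - x ^+ 2).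

Definition is_cycle_of (T : eqType) (g : T -> T) (alpha : T) (n : nat) : Prop :=
  (0 < n)%N /\ iter n g alpha = alpha /\
  (forall i j : nat, (i < j < n)%N -> iter i g alpha != iter j g alpha).

(* For x <> 0 put r(x) = x^q / x.  Since x^(q^2) = x and c^q = c, raising
   f(x) = c x^2 (x^(q-1) - 1) to the q-th power gives f(x)^q = -x^(q-1) f(x),
   i.e. r(f(x)) = -r(x) whenever f(x) <> 0.  A cycle of length n > 1 avoids the
   fixed point 0, so going once around it gives r(alpha) = (-1)^n r(alpha); for
   n odd this forces 2 r(alpha) = 0, impossible in odd characteristic. *)
From HB Require Import structures.
From mathcomp Require Import all_boot all_order all_algebra all_field.
From mathcomp Require Import ring.
Set Implicit Arguments. Unset Strict Implicit. Unset Printing Implicit Defensive.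
Local Open Scope ring_scope.
Import GRing.Theory.

Lemma iter_cycle_fixpoint (T : eqType) (g : T -> T) (alpha z : T) (n : nat) :
  is_cycle_of g alpha n -> (1 < n)%N -> g z = z ->
  forall i, iter i g alpha != z.
Proof.
move=> [_ [gn_alpha distinct]] n_gt1 gz i; apply/eqP => gi_alpha.
have alpha_z : alpha = z.
  have <- : iter (i * n.-1 + i) g alpha = alpha.
    by rewrite -mulnSr prednK ?(ltnW n_gt1) // iterM iter_fix.
  by rewrite iterD gi_alpha iter_fix.
by have := distinct 0%N 1%N; rewrite n_gt1 /= alpha_z gz eqxx => /(_ isT).
Qed.

Lemma iter_antiperiodic (T : Type) (R : pzRingType) (g : T -> T) (r : T -> R)
    (alpha : T) :
  (forall i, r (iter i.+1 g alpha) = - r (iter i g alpha)) ->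
  forall i, r (iter i g alpha) = (-1) ^+ i * r alpha.
Proof.
by move=> flip; elim=> [|i IHi]; rewrite ?mul1r // flip IHi exprS mulN1r mulNr.
Qed.

Section FrobeniusTwist.

Variables (F : finFieldType) (q : nat) (c : F).
Hypothesis q_pchar : [pchar F].-nat q.
Hypothesis frobenius_involutive : forall x : F, x ^+ q ^+ q = x.
Hypothesis c_fixed : c ^+ q = c.

Lemma fmap0 : fmap q c 0 = 0.
Proof. by rewrite /fmap !expr0n subrr mulr0. Qed.

Lemma fmap_frobenius (x : F) :
  fmap q c x ^+ q * x = - (x ^+ q * fmap q c x).
Proof.
rewrite /fmap exprS expr2 exprMn c_fixed exprDn_pchar // exprNn_pchar //.
by rewrite !exprMn frobenius_involutive; ring.
Qed.

Lemma fmap_frobenius_ratio (x : F) :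
  x != 0 -> fmap q c x != 0 ->
  fmap q c x ^+ q / fmap q c x = - (x ^+ q / x).
Proof.
move=> x_neq0 fx_neq0.
have -> : fmap q c x ^+ q / fmap q c x = fmap q c x ^+ q * x / (x * fmap q c x).
  by field; rewrite x_neq0 fx_neq0.
by rewrite fmap_frobenius; field; rewrite x_neq0 fx_neq0.
Qed.

End FrobeniusTwist.

Theorem lemma8 (F : finFieldType) (p k q : nat) (c : F) :
  prime p -> odd p -> (0 < k)%N -> q = (p ^ k)%N ->
  #|F| = (q ^ 2)%N ->
  c != 0 -> c ^+ q = c ->
  forall (alpha : F) (n : nat),
    is_cycle_of (fmap q c) alpha n -> (1 < n)%N -> ~~ odd n.
Proof.
move=> p_prime p_odd _ qE cardF _ c_fixed alpha n cyc n_gt1.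
have p_char : p \in [pchar F].
  by apply: (card_finPcharP (n := (k * 2)%N)); rewrite // cardF qE expnM.
have q_pchar : [pchar F].-nat q.
  by rewrite qE pnatX (eq_pnat _ (pcharf_eq p_char)) pnat_id.
have two_neq0 : (2%:R : F) != 0.
  rewrite -(dvdn_pcharf p_char) (dvdn_prime2 p_prime (isT : prime 2)).
  by apply: contraTN p_odd => /eqP ->.
have frob2 (x : F) : x ^+ q ^+ q = x.
  by rewrite -exprM -[(q * q)%N]/(q ^ 2)%N -cardF expf_card.
have orbit_neq0 := iter_cycle_fixpoint cyc n_gt1 (fmap0 q c).
pose r (x : F) := x ^+ q / x.
have r_flip i : r (iter i.+1 (fmap q c) alpha) = - r (iter i (fmap q c) alpha).
  by rewrite /r iterS fmap_frobenius_ratio // (orbit_neq0 i.+1).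
have r_alpha_neq0 : r alpha != 0.
  by rewrite mulf_neq0 ?invr_eq0 ?expf_neq0 // (orbit_neq0 0%N).
apply/negP => n_odd.
have := iter_antiperiodic r_flip n.
rewrite cyc.2.1 -signr_odd n_odd mulN1r => /eqP.
rewrite -subr_eq0 opprK -mulr2n -mulr_natl mulf_eq0.
by rewrite (negbTE two_neq0) (negbTE r_alpha_neq0).
Qed.
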